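(* Let $M$ and $M'$ be two stable matchings in an instance $I$ of SPA-S, and let $M^\lor$ be the assignment defined from $M,M'$ in the context. If a lecturer $l_k$ is undersubscribed in $M^\lor$, then $l_k$ is undersubscribed in both $M$ and $M'$.
   Context: An instance $I$ of SPA-S consists of a finite set $\mathcal{S}$ of students, a finite set $\mathcal{P}$ of projects and a finite set $\mathcal{L}$ of lecturers. Each student $s_i$ ranks a subset $A_i\subseteq\mathcal{P}$ (its acceptable projects) in strict order. Each project is offered by exactly one lecturer; lecturer $l_k$ offers a nonempty set $P_k\subseteq\mathcal{P}$, the $P_k$ partitioning $\mathcal{P}$. Each lecturer $l_k$ ranks in strict order the students who find at least one project of $P_k$ acceptable. Projects have capacities $c_j\in\mathbb{Z}^+$, lecturers have capacities $d_k\in\mathbb{Z}^+$ with $\max\{c_j:p_j\in P_k\}\le d_k\le\sum\{c_j:p_j\in P_k\}$. A pair $(s_i,p_j)$, $p_j$ offered by $l_k$, is acceptable if $p_j\in A_i$ and $s_i$ is on $l_k$'s list. A matching $M$ is a set of acceptable pairs with each student in at most one pair, $|M(p_j)|\le c_j$, $|M(l_k)|\le d_k$, where for an assignment $M$ (a set of acceptable pairs), $M(s_i)$, $M(p_j)$, $M(l_k)$ denote the project of $s_i$, the students assigned to $p_j$, and the students assigned to projects of $l_k$. Undersubscribed/full means fewer than/exactly capacity many assigned students. An acceptable pair $(s_i,p_j)\notin M$ ($p_j$ offered by $l_k$) blocks $M$ if ($s_i$ is unassigned or prefers $p_j$ to $M(s_i)$) and one of: (P1) $p_j$ and $l_k$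 undersubscribed; (P2) $p_j$ undersubscribed, $l_k$ full, $s_i\in M(l_k)$; (P3) $p_j$ undersubscribed, $l_k$ full, $l_k$ prefers $s_i$ to the worst student of $M(l_k)$; (P4) $p_j$ full and $l_k$ prefers $s_i$ to the worst student of $M(p_j)$. $M$ is stable if it has no blocking pair. Given stable matchings $M,M'$, $M^\lor$ is the assignment in which each student unassigned in both $M$ and $M'$ is unassigned, each student assigned to the same project in both is assigned to that project, and every other student is assigned to the worse (in her preference) of her projects in $M$ and $M'$. *)

From mathcomp Require Import all_boot.
Set Warnings "-notation-overridden".
Set Implicit Arguments. Unset Strict Implicit. Unset Printing Implicit Defensive.

(* An SPA-S instance. Preference lists are strict orders given by rank
   functions (smaller rank = more preferred), injective on the list. *)
Record spas := SPAS {
  Student : finType;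
  Project : finType;
  Lecturer : finType;
  acc : Student -> {set Project};
  srank : Student -> Project -> nat;
  offerer : Project -> Lecturer;
  lrank : Lecturer -> Student -> nat;
  pcap : Project -> nat;
  lcap : Lecturer -> nat
}.

Section SPAS.
Variable I : spas.
Local Notation S := (Student I).
Local Notation P := (Project I).
Local Notation L := (Lecturer I).

Definition offered (k : L) : {set P} := [set p | offerer p == k].

(* the students on l_k's list: those finding some project of P_k acceptable *)
Definition llist (k : L) : {set S} :=
  [set s | [exists p, (p \in offered k) && (p \in acc s)]].

Definition wf_instance : Prop :=
  [/\ (forall s : S, {in acc s &, injective (srank s)}),
      (forall k, {in llist k &, injective (lrank k)}),
      (forall k, offered k != set0),
      (forall p : P, 0 < pcap p) &
      (forall k, (\max_(p in offered k) pcap p <= lcap k)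
                 /\ (lcap k <= \sum_(p in offered k) pcap p))].

Definition acceptable (s : S) (p : P) : bool :=
  (p \in acc s) && (s \in llist (offerer p)).

Definition assignment := S -> option P.

Definition Mp (M : assignment) (p : P) : {set S} := [set s | M s == Some p].
Definition Ml (M : assignment) (k : L) : {set S} :=
  [set s | if M s is Some p then offerer p == k else false].

Definition is_matching (M : assignment) : Prop :=
  [/\ (forall s p, M s = Some p -> acceptable s p),
      (forall p, #|Mp M p| <= pcap p) &
      (forall k, #|Ml M k| <= lcap k)].

Definition p_under (M : assignment) p := #|Mp M p| < pcap p.
Definition p_full (M : assignment) p := #|Mp M p| == pcap p.
Definition l_under (M : assignment) k := #|Ml M k| < lcap k.
Definition l_full (M : assignment) k := #|Ml M k| == lcap k.

Definition worst_of (k : L) (T : {set S}) (w : S) : Prop :=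
  w \in T /\ forall t, t \in T -> lrank k t <= lrank k w.

Definition prefers_to_worst (k : L) (s : S) (T : {set S}) : Prop :=
  exists w, worst_of k T w /\ lrank k s < lrank k w.

Definition blocking (M : assignment) (s : S) (p : P) : Prop :=
  let k := offerer p in
  [/\ acceptable s p, M s <> Some p,
      (M s = None \/ exists q, M s = Some q /\ srank s p < srank s q) &
      [\/ p_under M p /\ l_under M k,
          [/\ p_under M p, l_full M k & s \in Ml M k],
          [/\ p_under M p, l_full M k & prefers_to_worst k s (Ml M k)] |
          p_full M p /\ prefers_to_worst k s (Mp M p)]].

Definition stable (M : assignment) : Prop :=
  is_matching M /\ forall s p, ~ blocking M s p.

Definition Mvee (M M' : assignment) : assignment := fun s =>
  match M s, M' s with
  | None, None => None
  | Some p, None => Some p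
  | None, Some q => Some q
  | Some p, Some q =>
      if p == q then Some p
      else if srank s p < srank s q then Some q else Some p
  end.

End SPAS.

From mathcomp Require Import all_boot zify.
Set Implicit Arguments. Unset Strict Implicit. Unset Printing Implicit Defensive.

(* Call s an M-winner if she strictly prefers her M-project to her M'-outcome
   (being unassigned is worst).  The key inequality is that a lecturer l has
   no more M-winners in M than in M'.  Take an M-winner s holding p in M.  As
   (s, p) does not block M', either p is full in M' with students l ranks above
   s, who then cannot be M'-winners (they would block M with p), which settles
   the count at p; or l is full in M' with students all ranked above s.  In the
   latter case the same argument with M and M' exchanged bounds the M'-winners
   of l in M' by those in M, students winning in neither hold the same project
   in both, and |M(l)| <= d_l = |M'(l)| gives the inequality again.  Finally,
   in M^\/ every M-winner of l in M' keeps her M'-project and every other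
   student of l in M keeps her M-project, so |M^\/(l)| >= |M(l)|; as M^\/ is
   symmetric in M and M', also |M^\/(l)| >= |M'(l)|. *)

Section StableMatchings.
Variable I : spas.
Local Notation S := (Student I).
Local Notation P := (Project I).
Local Notation L := (Lecturer I).

Hypothesis srank_inj : forall s : S, {in acc s &, injective (srank s)}.
Hypothesis lrank_inj : forall k : L, {in llist k &, injective (lrank k)}.

Definition improves (s : S) (p : P) (o : option P) : bool :=
  if o is Some q then srank s p < srank s q else true.

Definition prefers (M1 M2 : assignment I) (s : S) : bool :=
  if M1 s is Some p then improves s p (M2 s) else false.

Definition Pref (M1 M2 : assignment I) : {set S} := [set s | prefers M1 M2 s].

Definition ranked_above (k : L) (T : {set S}) (s : S) : bool :=
  [forall u in T, lrank k u < lrank k s].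

Lemma improves_neq (s : S) (p : P) (o : option P) :
  improves s p o -> o <> Some p.
Proof. by move=> + e; rewrite e /= ltnn. Qed.

Lemma prefers_asym (M1 M2 : assignment I) (s : S) :
  prefers M1 M2 s -> ~~ prefers M2 M1 s.
Proof.
rewrite /prefers; case: (M1 s) => [p|] //; case: (M2 s) => [q|] //= lt_pq.
by rewrite -leqNgt ltnW.
Qed.

Lemma prefers_to_worstP (k : L) (s : S) (T : {set S}) :
  prefers_to_worst k s T <-> exists2 u, u \in T & lrank k s < lrank k u.
Proof.
split=> [[w [[wT _] lt_sw]] | [u uT lt_su]]; first by exists w.
have [w wT wmax] := arg_maxnP (lrank k) uT.
by exists w; split=> //; apply: leq_trans lt_su (wmax _ uT).
Qed.

Lemma Mp_Ml (M : assignment I) (p : P) (s : S) :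
  s \in Mp M p -> s \in Ml M (offerer p).
Proof. by rewrite !inE => /eqP ->. Qed.

Lemma Ml_llist (M : assignment I) (k : L) (s : S) :
  is_matching M -> s \in Ml M k -> s \in llist k.
Proof.
case=> accM _ _; rewrite inE; case e: (M s) => [p|] // /eqP <-.
by case/andP: (accM _ _ e).
Qed.

Lemma ranked_above_of_not_worse (k : L) (T : {set S}) (s : S) :
  {subset T <= llist k} -> s \in llist k -> s \notin T ->
  ~ prefers_to_worst k s T -> ranked_above k T s.
Proof.
move=> sub_T sk sNT not_worse; apply/forall_inP => u uT.
rewrite ltn_neqAle; apply/andP; split.
  by apply: contraNneq sNT => /(lrank_inj (sub_T _ uT) sk) <-.
rewrite leqNgt; apply/negP => lt_su.
by apply: not_worse; apply/prefers_to_worstP; exists u.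
Qed.

Lemma stable_improves (M : assignment I) (s : S) (p : P) :
  stable M -> acceptable s p -> improves s p (M s) ->
  (p_full M p /\ ranked_above (offerer p) (Mp M p) s) \/
  (l_full M (offerer p) /\ ranked_above (offerer p) (Ml M (offerer p)) s).
Proof.
move=> stM acc_sp imp; have [[_ capp capl] nonblocking] := stM.
have sk : s \in llist (offerer p) by case/andP: acc_sp.
have better : M s = None \/ exists q, M s = Some q /\ srank s p < srank s q.
  by move: imp; case: (M s) => [q|]; [right; exists q | left].
have block c := nonblocking s p (And4 acc_sp (improves_neq imp) better c).
have [p_underM | p_not_underM] := boolP (p_under M p).
  right; have l_fullM : l_full M (offerer p).
    rewrite /l_full eqn_leq capl leqNgt; apply/negP => l_underM.
    by apply: block; apply: Or41.
  split=> //; apply: ranked_above_of_not_worse => //.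
  - by move=> u; apply: Ml_llist stM.1.
  - by apply/negP => sl; apply: block; apply: Or42.
  - by move=> worse; apply: block; apply: Or43.
have p_fullM : p_full M p by rewrite /p_full eqn_leq capp leqNgt.
left; split=> //; apply: ranked_above_of_not_worse => //.
- by move=> u /Mp_Ml; apply: Ml_llist stM.1.
- by rewrite inE; apply/negP => /eqP /(improves_neq imp).
- by move=> worse; apply: block; apply: Or44.
Qed.

Lemma stable_improves_Mp (M : assignment I) (s : S) (p : P) :
  stable M -> acceptable s p -> improves s p (M s) ->
  ranked_above (offerer p) (Mp M p) s.
Proof.
move=> stM acc_sp imp.
case: (stable_improves stM acc_sp imp) => [[_ //] | [_ /forall_inP above]].
by apply/forall_inP => u /Mp_Ml; apply: above.
Qed.

Lemma eq_of_not_prefers (M1 M2 : assignment I) (s : S) :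
  is_matching M1 -> is_matching M2 ->
  ~~ prefers M1 M2 s -> ~~ prefers M2 M1 s -> M1 s = M2 s.
Proof.
move=> [acc1 _ _] [acc2 _ _]; rewrite /prefers.
case e1: (M1 s) => [p|]; case e2: (M2 s) => [q|] //=.
rewrite -!leqNgt => le_qp le_pq.
have [/andP [p_acc _] /andP [q_acc _]] := (acc1 _ _ e1, acc2 _ _ e2).
congr Some; apply: (srank_inj p_acc q_acc).
by apply/eqP; rewrite eqn_leq le_pq le_qp.
Qed.

(* Such a t would block M with p, where l ranks her above s. *)
Lemma not_prefers_of_ranked_above (M M' : assignment I) (s : S) (p : P) (t : S) :
  stable M -> is_matching M' -> M s = Some p ->
  ranked_above (offerer p) (Mp M' p) s -> t \in Mp M' p -> ~~ prefers M' M t.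
Proof.
move=> stM [accM' _ _] Ms /forall_inP above tp; apply/negP => pref_t.
have M't : M' t = Some p by move: tp; rewrite inE => /eqP.
rewrite /prefers M't in pref_t.
have /forall_inP below := stable_improves_Mp stM (accM' _ _ M't) pref_t.
have sp : s \in Mp M p by rewrite inE Ms.
by have := ltn_trans (above _ tp) (below _ sp); rewrite ltnn.
Qed.

Lemma leq_card_setI (T : finType) (A B Y : {set T}) :
  #|B| <= #|A| -> #|A :\: Y| <= #|B :\: Y| -> #|B :&: Y| <= #|A :&: Y|.
Proof. by rewrite -(cardsID Y A) -(cardsID Y B); lia. Qed.

Lemma card_Mp_prefers (M M' : assignment I) (p : P) (k := offerer p) :
  stable M -> stable M' ->
  (forall s, s \in Mp M p :&: Pref M M' ->
     ~~ (l_full M' k && ranked_above k (Ml M' k) s)) ->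
  #|Mp M p :&: Pref M M'| <= #|Mp M' p :&: Pref M M'|.
Proof.
move=> stM stM' no_lecturer_case.
have [-> | [s sX]] := set_0Vmem (Mp M p :&: Pref M M'); first by rewrite cards0.
have [sp pref_s] : s \in Mp M p /\ prefers M M' s.
  by move: sX; rewrite !inE => /andP [].
have Ms : M s = Some p by move: sp; rewrite inE => /eqP.
have [[accM capp _] _] := stM.
rewrite /prefers Ms in pref_s.
have [[p_full' above] | [l_full' above]] :=
    stable_improves stM' (accM _ _ Ms) pref_s;
  last by move/negP: (no_lecturer_case s sX); rewrite l_full' above.
apply: leq_card_setI; first by rewrite (eqP p_full'); apply: capp.
apply/subset_leq_card/subsetP => u /setDP [up]; rewrite inE => not_pref.
have /[!inE] /eqP M'u := up.
have not_pref' := not_prefers_of_ranked_above stM stM'.1 Ms above up.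
rewrite not_pref (eq_of_not_prefers stM.1 stM'.1 not_pref not_pref').
by rewrite M'u eqxx.
Qed.

Lemma card_Ml_setI (M : assignment I) (l : L) (Y : {set S}) :
  #|Ml M l :&: Y| = \sum_(q in offered l) #|Mp M q :&: Y|.
Proof.
have [offered0 | [q0 _]] := set_0Vmem (offered l).
  rewrite offered0 big_set0; apply/eqP; rewrite cards_eq0; apply/eqP/setP => s.
  rewrite !inE; case: (M s) => [p|] //=; apply/negbTE/negP => /andP [/eqP pl _].
  by have /[!(offered0, inE)] : p \in offered l by rewrite inE pl.
rewrite -sum1_card (partition_big (fun s => odflt q0 (M s)) (mem (offered l))).
  apply: eq_bigr => q ql; rewrite -sum1_card; apply: eq_bigl => s.
  rewrite !inE in ql; rewrite !inE; case: (M s) => [p|] //=.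
  have [-> | ne_pq] := eqVneq p q; first by rewrite ql !eqxx andbT.
  by rewrite andbF; case: eqP => // -[] /eqP; rewrite (negbTE ne_pq).
by move=> s; rewrite !inE; case: (M s) => [p|] //= /andP [].
Qed.

(* Students indifferent between M and M' hold the same project in both. *)
Lemma card_Ml_setD_Pref (M M' : assignment I) (l : L) :
  is_matching M -> is_matching M' ->
  #|Ml M' l :&: Pref M' M| <= #|Ml M l :&: Pref M' M| ->
  #|Ml M' l :\: Pref M M'| <= #|Ml M l :\: Pref M M'|.
Proof.
move=> matM matM'; set X := Pref M M'; set Y := Pref M' M.
have splitD (A : {set S}) : #|A :\: X| = #|A :&: Y| + #|A :\: (X :|: Y)|.
  rewrite -(cardsID Y (A :\: X)) setDDl; congr (_ + _); apply: eq_card => s.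
  rewrite !inE; have [pref_s | _] := boolP (prefers M' M s).
    by rewrite (negbTE (prefers_asym pref_s)) andbT.
  by rewrite !andbF.
have same : Ml M' l :\: (X :|: Y) = Ml M l :\: (X :|: Y).
  apply/setP => s; rewrite !inE negb_or.
  have [//|not_pref] := boolP (prefers M M' s).
  have [//|not_pref'] := boolP (prefers M' M s).
  by rewrite (eq_of_not_prefers matM matM' not_pref not_pref').
by rewrite !splitD same leq_add2r.
Qed.

Lemma card_Ml_prefers (M M' : assignment I) (l : L) :
  stable M -> stable M' -> #|Ml M l :&: Pref M M'| <= #|Ml M' l :&: Pref M M'|.
Proof.
move=> stM stM'.
have [/exists_inP [s /setIP [sl _] /andP [l_full' above]] | no_lecturer_case] :=
  boolP [exists s in Ml M l :&: Pref M M',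
           l_full M' l && ranked_above l (Ml M' l) s].
  have card_Y : #|Ml M' l :&: Pref M' M| <= #|Ml M l :&: Pref M' M|.
    rewrite !card_Ml_setI; apply: leq_sum => q /[!inE] /eqP ql.
    apply: card_Mp_prefers => // t /setIP [tq _]; rewrite ql.
    apply/negP => /andP [_ /forall_inP below].
    have /forall_inP/(_ t) := above; rewrite -ql (Mp_Ml tq) => /(_ isT).
    by rewrite ql => /(ltn_trans (below _ sl)); rewrite ltnn.
  apply: leq_card_setI.
    by rewrite (eqP l_full'); have [[_ _ ->]] := stM.
  exact: card_Ml_setD_Pref stM.1 stM'.1 card_Y.
rewrite !card_Ml_setI; apply: leq_sum => p /[!inE] /eqP pl.
apply: card_Mp_prefers => // s /setIP [sp pref_s]; rewrite pl.
apply: contraNN no_lecturer_case => lecturer_case.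
apply/exists_inP; exists s => //.
by apply/setIP; split; rewrite // -pl; apply: Mp_Ml.
Qed.

Lemma card_Ml_Mvee (M M' : assignment I) (k : L) :
  #|Ml M' k :&: Pref M M'| + #|Ml M k :\: Pref M M'| <= #|Ml (Mvee M M') k|.
Proof.
rewrite -cardsUI.
have -> : (Ml M' k :&: Pref M M') :&: (Ml M k :\: Pref M M') = set0.
  apply/setP => s; rewrite !inE.
  by case: (prefers M M' s); rewrite ?andbF ?andFb.
rewrite cards0 addn0.
apply/subset_leq_card/subsetP => s; rewrite !inE /Mvee /prefers.
case: (M s) => [p|]; case: (M' s) => [q|] //=.
- by move=> /orP [/andP [qk ->] | /andP [/negbTE -> pk]];
    [case: eqVneq => [->|] | case: (p == q)].
- by rewrite andbF.
Qed.

Lemma card_Ml_leq_Mvee (M M' : assignment I) (k : L) :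
  stable M -> stable M' -> #|Ml M k| <= #|Ml (Mvee M M') k|.
Proof.
move=> stM stM'; rewrite -(cardsID (Pref M M') (Ml M k)).
by apply: leq_trans (card_Ml_Mvee M M' k); rewrite leq_add2r card_Ml_prefers.
Qed.

Lemma Mvee_sym (M M' : assignment I) :
  is_matching M -> is_matching M' -> Mvee M M' =1 Mvee M' M.
Proof.
move=> [accM _ _] [accM' _ _] s; rewrite /Mvee.
case eM: (M s) => [p|]; case eM': (M' s) => [q|] //.
have [/andP [p_acc _] /andP [q_acc _]] := (accM _ _ eM, accM' _ _ eM').
have [<- // | _] := eqVneq p q.
by case: ltngtP => // eq_rank; congr Some; apply: srank_inj p_acc q_acc eq_rank.
Qed.

End StableMatchings.

Theorem lemma9 (I : spas) (M M' : assignment I) (k : Lecturer I) :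
  wf_instance I -> stable M -> stable M' ->
  l_under (Mvee M M') k -> l_under M k /\ l_under M' k.
Proof.
case=> srank_inj lrank_inj _ _ _ stM stM'; rewrite /l_under => under_vee.
have Ml_vee_sym : Ml (Mvee M M') k = Ml (Mvee M' M) k.
  by apply/setP => s; rewrite !inE (Mvee_sym srank_inj stM.1 stM'.1).
split; apply: leq_ltn_trans under_vee.
  exact: card_Ml_leq_Mvee.
by rewrite Ml_vee_sym; apply: card_Ml_leq_Mvee.
Qed.
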